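(* Every compact metric space, viewed as a structure in the metric signature, has Scott rank at most $\omega$.
   Context: A metric space $(X,d)$ is viewed as a first-order structure in the signature $\{R_q : q\in\mathbb{Q}^+\}$ of binary relation symbols, where $R_q(x,y)$ holds iff $d(x,y)<q$. For a structure $M$ and finite tuples $\bar a,\bar b$ of the same length from $M$, define $\bar a\equiv_\alpha\bar b$ by induction on ordinals $\alpha$: $\bar a\equiv_0\bar b$ iff $\bar a,\bar b$ have the same quantifier-free type; for limit $\alpha$, $\bar a\equiv_\alpha\bar b$ iff $\bar a\equiv_\beta\bar b$ for all $\beta<\alpha$; $\bar a\equiv_{\alpha+1}\bar b$ iff for every $x\in M$ there is $y\in M$ with $\bar a x\equiv_\alpha\bar b y$, and for every $y\in M$ there is $x\in M$ with $\bar a x\equiv_\alpha \bar b y$. The Scott rank of $M$ is the least ordinal $\alpha$ such that for all finite tuples $\bar a,\bar b$ from $M$, $\bar a\equiv_\alpha\bar b$ implies $\bar a\equiv_{\alpha+1}\bar b$. *)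

From Stdlib Require Import Reals QArith List.
Open Scope R_scope.

Definition is_metric {X : Type} (d : X -> X -> R) : Prop :=
  (forall x y, 0 <= d x y) /\
  (forall x y, d x y = 0 <-> x = y) /\
  (forall x y, d x y = d y x) /\
  (forall x y z, d x z <= d x y + d y z).

Definition metric_open {X : Type} (d : X -> X -> R) (U : X -> Prop) : Prop :=
  forall x, U x -> exists eps, 0 < eps /\ forall y, d x y < eps -> U y.

Definition metric_compact {X : Type} (d : X -> X -> R) : Prop :=
  forall (I : Type) (U : I -> X -> Prop),
    (forall i, metric_open d (U i)) ->
    (forall x, exists i, U i x) ->
    exists l : list I, forall x, exists i, In i l /\ U i x.

(** A tuple of length k is represented by (k, a) with a : nat -> X; only the
    entries a 0, ..., a (k-1) matter. *)
Definition snoc {X : Type} (k : nat) (a : nat -> X) (x : X) : nat -> X :=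
  fun i => if Nat.eqb i k then x else a i.

(** Same quantifier-free type in the signature {R_q : q in Q^+} (with equality),
    where R_q(x,y) iff d x y < q. *)
Definition same_qftype {X : Type} (d : X -> X -> R) (k : nat) (a b : nat -> X) : Prop :=
  forall i j, (i < k)%nat -> (j < k)%nat ->
    (a i = a j <-> b i = b j) /\
    (forall q : Q, (0 < q)%Q -> (d (a i) (a j) < Q2R q <-> d (b i) (b j) < Q2R q)).

Fixpoint bf_equiv {X : Type} (d : X -> X -> R) (m : nat) (k : nat) (a b : nat -> X) : Prop :=
  match m with
  | O => same_qftype d k a b
  | S m' =>
      (forall x, exists y, bf_equiv d m' (S k) (snoc k a x) (snoc k b y)) /\
      (forall y, exists x, bf_equiv d m' (S k) (snoc k a x) (snoc k b y))
  end.

Definition bf_equiv_omega {X : Type} (d : X -> X -> R) (k : nat) (a b : nat -> X) : Prop :=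
  forall m, bf_equiv d m k a b.

Definition bf_equiv_omega1 {X : Type} (d : X -> X -> R) (k : nat) (a b : nat -> X) : Prop :=
  (forall x, exists y, bf_equiv_omega d (S k) (snoc k a x) (snoc k b y)) /\
  (forall y, exists x, bf_equiv_omega d (S k) (snoc k a x) (snoc k b y)).

(** Scott rank <= ω: the least α with (≡_α ⊆ ≡_{α+1} on all tuples) is <= ω,
    i.e. some α in {0,1,2,...,ω} has this property. *)
Definition scott_rank_le_omega {X : Type} (d : X -> X -> R) : Prop :=
  (exists m : nat, forall k (a b : nat -> X),
      bf_equiv d m k a b -> bf_equiv d (S m) k a b) \/
  (forall k (a b : nat -> X), bf_equiv_omega d k a b -> bf_equiv_omega1 d k a b).

(** Write ≡_n for the back-and-forth relations of [Defs].  The proof rests on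
    two facts about a compact metric space X.

    (1) Each ≡_n is topologically closed: if a and b are limits of pairs of
        ≡_n-equivalent tuples, then a ≡_n b.  For n = 0 this is continuity of
        the metric (≡_0 means "same distance matrix", since the rationals are
        dense).  For n+1 we use compactness: if a point x had no ≡_n-partner
        for b, closedness of ≡_n gives each candidate z a ball of bad
        partners; finitely many balls cover X, and a sufficiently close
        ≡_{n+1}-approximation of (a, b) then yields a contradiction.

    (2) ≡_ω implies ≡_{ω+1}: if x had no ≡_ω-partner, every candidate z is
        refuted at some finite level m_z, and by (1) uniformly on a ball
        around z; a finite subcover bounds the levels by some M, and the
        forth property of a ≡_{M+1} b then yields a partner of x inside one
        of the refuting balls.

    Hence the back-and-forth hierarchy stabilises at ω, which is the second
    disjunct of [scott_rank_le_omega]. *)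

From Pilot Require Import Defs.
From Stdlib Require Import Reals QArith Qreals Lra Lia List Classical.
Open Scope R_scope.

Lemma Q_dense (x y : R) : x < y -> exists q : Q, x < Q2R q < y.
Proof.
  intros Hxy.
  set (n := up (/ (y - x))).
  destruct (archimed (/ (y - x))) as [Hn _]; fold n in Hn.
  assert (Hinv : 0 < / (y - x)) by (apply Rinv_0_lt_compat; lra).
  assert (Hn0 : (0 < n)%Z) by (apply lt_0_IZR; lra).
  assert (HnR : 0 < IZR n) by (apply IZR_lt; lia).
  set (m := up (x * IZR n)).
  destruct (archimed (x * IZR n)) as [Hm1 Hm2]; fold m in Hm1, Hm2.
  assert (Hwide : 1 < IZR n * (y - x)).
  { apply (Rmult_lt_reg_r (/ (y - x))); [exact Hinv|].
    rewrite Rmult_assoc, Rinv_r, Rmult_1_r by lra. lra. }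
  exists (m # Z.to_pos n).
  assert (Hq : Q2R (m # Z.to_pos n) = IZR m / IZR n).
  { unfold Q2R; simpl. rewrite Z2Pos.id by lia. reflexivity. }
  rewrite Hq. split.
  - apply (Rmult_lt_reg_r (IZR n)); [exact HnR|]. field_simplify; lra.
  - apply (Rmult_lt_reg_r (IZR n)); [exact HnR|].
    unfold Rdiv. rewrite Rmult_assoc, Rinv_l, Rmult_1_r by lra. nra.
Qed.

(** A nonnegative real strictly below [y] is separated from [y] by a positive
    rational; this is how the relations [R_q] detect distances. *)
Lemma Q_separates (x y : R) :
  0 <= x -> x < y -> exists q : Q, (0 < q)%Q /\ x < Q2R q < y.
Proof.
  intros Hx Hxy. destruct (Q_dense x y Hxy) as [q Hq]. exists q. split; [|exact Hq].
  apply Rlt_Qlt. unfold Q2R at 1; simpl. lra.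
Qed.

Lemma list_pos_lower_bound (l : list R) :
  (forall r, In r l -> 0 < r) -> exists delta, 0 < delta /\ forall r, In r l -> delta <= r.
Proof.
  induction l as [|r l IH]; intros Hpos.
  - exists 1. split; [lra | intros r []].
  - destruct IH as [delta [Hdelta Hle]]; [intros s Hs; apply Hpos; right; exact Hs|].
    assert (Hr : 0 < r) by (apply Hpos; left; reflexivity).
    exists (Rmin r delta). split; [now apply Rmin_glb_lt|].
    intros s [<- | Hs]; [apply Rmin_l|].
    eapply Rle_trans; [apply Rmin_r | now apply Hle].
Qed.

Lemma list_common_index {A : Type} (Q : A -> nat -> Prop) (l : list A) :
  (forall p m m', (m <= m')%nat -> Q p m -> Q p m') ->
  (forall p, In p l -> exists m, Q p m) ->
  exists M, forall p, In p l -> Q p M.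
Proof.
  intros Hup. induction l as [|p l IH]; intros Hex.
  - exists O. intros p [].
  - destruct (Hex p (or_introl eq_refl)) as [m Hm].
    destruct IH as [M HM]; [intros q Hq; apply Hex; right; exact Hq|].
    exists (Nat.max m M). intros q [-> | Hq].
    + apply (Hup q m); [lia | exact Hm].
    + apply (Hup q M); [lia | now apply HM].
Qed.

Section CompactMetric.

Context {X : Type} (d : X -> X -> R) (Hmetric : is_metric d).

Lemma d_nonneg x y : 0 <= d x y.
Proof. apply Hmetric. Qed.

Lemma d_refl x : d x x = 0.
Proof. now apply Hmetric. Qed.

Lemma d_zero x y : d x y = 0 -> x = y.
Proof. apply Hmetric. Qed.

Lemma d_sym x y : d x y = d y x.
Proof. apply Hmetric. Qed.

Lemma d_triangle x y z : d x z <= d x y + d y z.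
Proof. apply Hmetric. Qed.

Lemma ball_open z e : metric_open d (fun y => d z y < e).
Proof.
  intros y Hy. exists (e - d z y). split; [lra|].
  intros w Hw. pose proof (d_triangle z y w). lra.
Qed.

Lemma same_qftype_iff k a b :
  same_qftype d k a b <->
  (forall i j, (i < k)%nat -> (j < k)%nat -> d (a i) (a j) = d (b i) (b j)).
Proof.
  split.
  - intros H i j Hi Hj. destruct (H i j Hi Hj) as [_ Hq].
    destruct (Rtotal_order (d (a i) (a j)) (d (b i) (b j))) as [Hlt | [Heq | Hgt]];
      [exfalso | exact Heq | exfalso].
    + destruct (Q_separates _ _ (d_nonneg _ _) Hlt) as [q [Hq0 [Hq1 Hq2]]].
      apply (Hq q Hq0) in Hq1. lra.
    + destruct (Q_separates _ _ (d_nonneg _ _) Hgt) as [q [Hq0 [Hq1 Hq2]]].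
      apply (Hq q Hq0) in Hq1. lra.
  - intros H i j Hi Hj. specialize (H i j Hi Hj). split; [split|].
    + intros E. apply d_zero. rewrite <- H, E. apply d_refl.
    + intros E. apply d_zero. rewrite H, E. apply d_refl.
    + intros q _. rewrite H. tauto.
Qed.

Lemma snoc_lt k (a : nat -> X) x i : (i < k)%nat -> snoc k a x i = a i.
Proof. intros Hi. unfold snoc. destruct (Nat.eqb_spec i k); [lia | reflexivity]. Qed.

Lemma snoc_last k (a : nat -> X) x : snoc k a x k = x.
Proof. unfold snoc. now rewrite Nat.eqb_refl. Qed.

Lemma bf_sym n : forall k a b, bf_equiv d n k a b -> bf_equiv d n k b a.
Proof.
  induction n as [|n IH]; intros k a b H; simpl in *.
  - apply same_qftype_iff. intros i j Hi Hj. symmetry.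
    now apply (same_qftype_iff k a b).
  - destruct H as [Hforth Hback]. split.
    + intros x. destruct (Hback x) as [y Hy]. exists y. now apply IH.
    + intros y. destruct (Hforth y) as [x Hx]. exists x. now apply IH.
Qed.

Lemma bf_succ_weaken n : forall k a b, bf_equiv d (S n) k a b -> bf_equiv d n k a b.
Proof.
  induction n as [|n IH]; intros k a b [Hforth Hback].
  - destruct (Hforth (a O)) as [y Hy]. apply same_qftype_iff. intros i j Hi Hj.
    rewrite <- (snoc_lt k a (a O) i), <- (snoc_lt k a (a O) j),
      <- (snoc_lt k b y i), <- (snoc_lt k b y j) by assumption.
    apply (same_qftype_iff (S k)); [exact Hy | lia | lia].
  - split.
    + intros x. destruct (Hforth x) as [y Hy]. exists y. now apply IH.
    + intros y. destruct (Hback y) as [x Hx]. exists x. now apply IH.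
Qed.

Lemma bf_weaken n m : (n <= m)%nat -> forall k a b, bf_equiv d m k a b -> bf_equiv d n k a b.
Proof.
  induction 1 as [|m _ IH]; intros k a b H; [exact H|].
  apply IH, bf_succ_weaken, H.
Qed.

Definition tuple_close k (a a' : nat -> X) e : Prop :=
  forall i, (i < k)%nat -> d (a i) (a' i) < e.

Lemma tuple_close_snoc k a a' x x' e :
  tuple_close k a a' e -> d x x' < e -> tuple_close (S k) (snoc k a x) (snoc k a' x') e.
Proof.
  intros Ha Hx i Hi. destruct (Nat.eq_dec i k) as [-> | Hne].
  - now rewrite !snoc_last.
  - rewrite !snoc_lt by lia. apply Ha. lia.
Qed.

Definition bf_adherent n k a b : Prop :=
  forall e, 0 < e -> exists a' b',
    tuple_close k a a' e /\ tuple_close k b b' e /\ bf_equiv d n k a' b'.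

Definition bf_closed n : Prop :=
  forall k a b, bf_adherent n k a b -> bf_equiv d n k a b.

Lemma bf_adherent_sym n k a b : bf_adherent n k a b -> bf_adherent n k b a.
Proof.
  intros H e He. destruct (H e He) as [a' [b' [Ha [Hb Hab]]]].
  exists b', a'. repeat split; auto. now apply bf_sym.
Qed.

Lemma bf_closed_separated n k a b :
  bf_closed n -> ~ bf_equiv d n k a b ->
  exists e, 0 < e /\ forall a' b',
    tuple_close k a a' e -> tuple_close k b b' e -> ~ bf_equiv d n k a' b'.
Proof.
  intros Hclosed Hnot.
  assert (Hfar : ~ bf_adherent n k a b) by (intros H; apply Hnot, Hclosed, H).
  apply not_all_ex_not in Hfar as [e He]. apply imply_to_and in He as [He Hno].
  exists e. split; [exact He|].
  intros a' b' Ha Hb Hab. apply Hno. now exists a', b'.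
Qed.

Lemma dist_close x x' y y' e :
  d x x' < e -> d y y' < e -> Rabs (d x y - d x' y') < 2 * e.
Proof.
  intros Hx Hy.
  pose proof (d_triangle x x' y). pose proof (d_triangle x' y' y).
  pose proof (d_triangle x' x y'). pose proof (d_triangle x y y').
  rewrite (d_sym y' y) in *. rewrite (d_sym x' x) in *.
  apply Rabs_def1; lra.
Qed.

Lemma bf_closed_0 : bf_closed 0.
Proof.
  intros k a b Hadh. apply same_qftype_iff. intros i j Hi Hj.
  assert (Hsmall : forall e, 0 < e -> Rabs (d (a i) (a j) - d (b i) (b j)) < 4 * e).
  { intros e He. destruct (Hadh e He) as [a' [b' [Ha [Hb Hab]]]].
    pose proof (dist_close _ _ _ _ _ (Ha i Hi) (Ha j Hj)) as Da.
    pose proof (dist_close _ _ _ _ _ (Hb i Hi) (Hb j Hj)) as Db.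
    rewrite ((proj1 (same_qftype_iff k a' b') Hab) i j Hi Hj) in Da.
    revert Da Db. split_Rabs; lra. }
  destruct (Rtotal_order (d (a i) (a j)) (d (b i) (b j))) as [Hlt | [Heq | Hgt]];
    [exfalso | exact Heq | exfalso].
  - specialize (Hsmall ((d (b i) (b j) - d (a i) (a j)) / 4)). revert Hsmall.
    split_Rabs; lra.
  - specialize (Hsmall ((d (a i) (a j) - d (b i) (b j)) / 4)). revert Hsmall.
    split_Rabs; lra.
Qed.

Context (Hcompact : metric_compact d).

Lemma compact_ball_cover (P : X -> R -> Prop) :
  (forall z, exists e, 0 < e /\ P z e) ->
  exists l : list (X * R),
    (forall p, In p l -> 0 < snd p /\ P (fst p) (snd p)) /\
    (forall y, exists p, In p l /\ d (fst p) y < snd p).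
Proof.
  intros Hex.
  set (I := {p : X * R | 0 < snd p /\ P (fst p) (snd p)}).
  set (U := fun (i : I) y => d (fst (proj1_sig i)) y < snd (proj1_sig i)).
  destruct (Hcompact I U) as [l Hl].
  - intros i. apply ball_open.
  - intros y. destruct (Hex y) as [e He].
    exists (exist _ (y, e) He). unfold U; simpl. now rewrite d_refl.
  - exists (map (@proj1_sig _ _) l). split.
    + intros p Hp. apply in_map_iff in Hp as [i [<- _]]. exact (proj2_sig i).
    + intros y. destruct (Hl y) as [i [Hi Hy]].
      exists (proj1_sig i). split; [now apply in_map | exact Hy].
Qed.

(** Otherwise each candidate z is
    refuted on a ball of radius 2e_z; a δ-approximation (a', b') with δ below
    all e_z of a finite subcover gives a partner y' of x lying in a refuting
    ball. *)
Lemma bf_adherent_forth n k a b :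
  bf_closed n -> bf_adherent (S n) k a b ->
  forall x, exists y, bf_equiv d n (S k) (snoc k a x) (snoc k b y).
Proof.
  intros Hclosed Hadh x. apply NNPP. intros Hnone.
  set (P := fun z e => forall a' b',
         tuple_close (S k) (snoc k a x) a' (2 * e) ->
         tuple_close (S k) (snoc k b z) b' (2 * e) -> ~ bf_equiv d n (S k) a' b').
  destruct (compact_ball_cover P) as [l [Hl Hcover]].
  { intros z.
    assert (Hz : ~ bf_equiv d n (S k) (snoc k a x) (snoc k b z)) by (intros H; apply Hnone; eauto).
    destruct (bf_closed_separated n _ _ _ Hclosed Hz) as [e [He Hsep]].
    exists (e / 2). split; [lra|]. intros a' b'.
    replace (2 * (e / 2)) with e by field. apply Hsep. }
  destruct (list_pos_lower_bound (map snd l)) as [delta [Hdelta Hle]].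
  { intros r Hr. apply in_map_iff in Hr as [p [<- Hp]]. apply (Hl p Hp). }
  destruct (Hadh delta Hdelta) as [a' [b' [Ha [Hb [Hforth _]]]]].
  destruct (Hforth x) as [y' Hy'].
  destruct (Hcover y') as [[z e] [Hin Hz]]; simpl in Hz.
  destruct (Hl _ Hin) as [He HP]; simpl in He, HP.
  assert (Hde : delta <= e) by (apply (Hle e), (in_map snd _ (z, e)), Hin).
  apply (HP (snoc k a' x) (snoc k b' y')); [| |exact Hy'];
    apply tuple_close_snoc.
  - intros i Hi. specialize (Ha i Hi). lra.
  - rewrite d_refl. lra.
  - intros i Hi. specialize (Hb i Hi). lra.
  - lra.
Qed.

Lemma bf_closed_all n : bf_closed n.
Proof.
  induction n as [|n IH]; [exact bf_closed_0|].
  intros k a b Hadh. split.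
  - now apply bf_adherent_forth.
  - intros y.
    destruct (bf_adherent_forth n k b a IH (bf_adherent_sym _ _ _ _ Hadh) y) as [x Hx].
    exists x. now apply bf_sym.
Qed.

(** Otherwise each candidate z is refuted at a finite level m_z on a ball
    around z (closedness of ≡_{m_z}); a finite subcover bounds these levels
    by M, and the forth property of ≡_{M+1} produces a partner in one of the
    refuting balls. *)
Lemma bf_omega_forth k a b :
  bf_equiv_omega d k a b ->
  forall x, exists y, bf_equiv_omega d (S k) (snoc k a x) (snoc k b y).
Proof.
  intros Hab x. apply NNPP. intros Hnone.
  set (Refuted := fun z e m => forall y, d z y < e ->
         ~ bf_equiv d m (S k) (snoc k a x) (snoc k b y)).
  destruct (compact_ball_cover (fun z e => exists m, Refuted z e m)) as [l [Hl Hcover]].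
  { intros z.
    assert (Hz : exists m, ~ bf_equiv d m (S k) (snoc k a x) (snoc k b z)).
    { apply not_all_ex_not. intros H. apply Hnone. now exists z. }
    destruct Hz as [m Hm].
    destruct (bf_closed_separated m _ _ _ (bf_closed_all m) Hm) as [e [He Hsep]].
    exists e. split; [exact He|]. exists m. intros y Hy.
    apply Hsep; [intros i _; now rewrite d_refl|].
    apply tuple_close_snoc; [intros i _; now rewrite d_refl | exact Hy]. }
  destruct (list_common_index (fun p m => Refuted (fst p) (snd p) m) l) as [M HM].
  { intros p m m' Hmm' Hm y Hy Hbf. apply (Hm y Hy). now apply (bf_weaken m m'). }
  { intros p Hp. apply (Hl p Hp). }
  destruct (Hab (S M)) as [Hforth _].
  destruct (Hforth x) as [y' Hy'].
  destruct (Hcover y') as [p [Hin Hp]].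
  exact (HM p Hin y' Hp Hy').
Qed.

End CompactMetric.

Theorem mainTheorem6 (X : Type) (d : X -> X -> R) :
  is_metric d -> metric_compact d -> scott_rank_le_omega d.
Proof.
  intros Hmetric Hcompact. right. intros k a b Hab. split.
  - exact (bf_omega_forth d Hmetric Hcompact k a b Hab).
  - intros y.
    assert (Hba : bf_equiv_omega d k b a) by (intros m; apply bf_sym, Hab; exact Hmetric).
    destruct (bf_omega_forth d Hmetric Hcompact k b a Hba y) as [x Hx].
    exists x. intros m. now apply bf_sym.
Qed.
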